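(* Let $X,Y$ be finite abelian groups, $Q\in M_{X\times Y}(\mathbb T)$, and for $i\in X$, $c\in Y$ let $P_c^{(i)}=\sum_{a\in Y}\sum_{j\in X}L_{ac}W_{ia,j0}\in M_{X\times Y}(\mathbb C)$ (the image of $c^{(i)}=\sum_aL_{ac}u^{(i)}_{a0}$). For $k\in X$, $e\in Y$ let $\varepsilon_{ke}=\sum_{x\in X}F_{xk}e_{xe}$, where $(e_{xe})$ is the standard basis of $\mathbb C^{X\times Y}$. Then $$P_c^{(i)}(\varepsilon_{ke})=\frac{Q_{i,e-c}Q_{i-k,e}}{Q_{ie}Q_{i-k,e-c}}\,\varepsilon_{k,e-c}.$$ In particular, if $c_1+\dots+c_s=0$, then $P_{c_1}^{(i_1)}\cdots P_{c_s}^{(i_s)}$ is diagonal in the basis $(\varepsilon_{ke})$, for any $i_1,\dots,i_s\in X$.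
   Context: Finite abelian groups are written additively. For a finite abelian group $Z\simeq\mathbb Z_{N_1}\times\cdots\times\mathbb Z_{N_s}$, $F_Z=F_{N_1}\otimes\cdots\otimes F_{N_s}$ with $F_n=(e^{2\pi ijk/n})_{j,k\in\mathbb Z_n}$. Let $F=F_X$, $L=F_Y$, $M=|X|$, $N=|Y|$, and define $W_{ia,jb}\in M_{X\times Y}(\mathbb C)$ by $(W_{ia,jb})_{kc,ld}=\frac{1}{MN}\frac{Q_{ic}Q_{jd}}{Q_{id}Q_{jc}}F_{i-j,k-l}L_{a-b,c-d}$ ($i,j,k,l\in X$, $a,b,c,d\in Y$). *)

From mathcomp Require Import all_boot all_order all_algebra all_field.
Set Implicit Arguments. Unset Strict Implicit. Unset Printing Implicit Defensive.
Import GRing.Theory Num.Theory.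
Local Open Scope ring_scope.

(* A finite abelian group Z_{N_0 + 1} x ... x Z_{N_(s-1) + 1}, the t-th cyclic
   factor having order (N t).+1 (so every cyclic group Z_n, n >= 1, occurs). *)
Definition fgrp (s : nat) (N : 'I_s -> nat) : finType :=
  {dffun forall t : 'I_s, 'I_(N t).+1}.

Definition gzero s (N : 'I_s -> nat) : fgrp N :=
  finfun (fun t => (0 : 'I_(N t).+1)%R).
Definition gadd s (N : 'I_s -> nat) (x y : fgrp N) : fgrp N :=
  finfun (fun t => (x t + y t : 'I_(N t).+1)%R).
Definition gsub s (N : 'I_s -> nat) (x y : fgrp N) : fgrp N :=
  finfun (fun t => (x t - y t : 'I_(N t).+1)%R).

(* exp(2 pi i / n) in algC: n.-root (-1) is the root of -1 of minimal
   nonnegative argument, i.e. exp(i pi / n); its square is exp(2 pi i / n). *)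
Definition omega (n : nat) : algC := (n.-root (-1)) ^+ 2.

(* F_Z = F_{n_1} (x) ... (x) F_{n_s}, with F_n = (exp(2 pi i jk/n))_{j,k}. *)
Definition fourier s (N : 'I_s -> nat) (x y : fgrp N) : algC :=
  \prod_(t : 'I_s) omega (N t).+1 ^+ (nat_of_ord (x t) * nat_of_ord (y t))%N.

Definition vect (X Y : finType) := X -> Y -> algC.
Definition mat (X Y : finType) := X -> Y -> X -> Y -> algC.

Definition mapply (X Y : finType) (A : mat X Y) (v : vect X Y) : vect X Y :=
  fun k c => \sum_(l : X) \sum_(d : Y) A k c l d * v l d.

Section W.
Variables (s r : nat) (NX : 'I_s -> nat) (NY : 'I_r -> nat).
Local Notation X := (fgrp NX).
Local Notation Y := (fgrp NY).
Variable Q : X -> Y -> algC.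

Definition Wmat (i : X) (a : Y) (j : X) (b : Y) : mat X Y :=
  fun k c l d =>
    (#|X|%:R * #|Y|%:R)^-1 * (Q i c * Q j d / (Q i d * Q j c))
    * fourier (gsub i j) (gsub k l) * fourier (gsub a b) (gsub c d).

Definition Pmat (i : X) (c : Y) : mat X Y :=
  fun k e l d => \sum_(a : Y) \sum_(j : X)
                   fourier a c * Wmat i a j (gzero NY) k e l d.

Definition ebasis (x : X) (e : Y) : vect X Y :=
  fun l d => ((l == x) && (d == e))%:R.
Definition eps (k : X) (e : Y) : vect X Y :=
  fun l d => \sum_(x : X) fourier x k * ebasis x e l d.

Definition Pprod_apply (ics : seq (X * Y)) (v : vect X Y) : vect X Y :=
  foldr (fun ic w => mapply (Pmat ic.1 ic.2) w) v ics.
End W.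

From mathcomp Require Import all_boot all_order all_algebra all_field.
From mathcomp Require Import ring lra.
Set Implicit Arguments. Unset Strict Implicit. Unset Printing Implicit Defensive.
Import Order.TTheory GRing.Theory Num.Theory.
Local Open Scope ring_scope.

(* In the entries
   of P_c^(i) the sum over a of L_{ac} L_{a,d-e} collapses, by orthogonality of
   characters, to the constraint d = e - c.  Applied to eps_{ke}, the sum over
   the first coordinate becomes a convolution of two characters, which by
   orthogonality again keeps only the term j = i - k.  For products, induction
   shows that the second index moves from e to e - (c_1 + ... + c_s).

   Orthogonality needs omega n = (n.-root (-1))^2 to be a primitive n-th root
   of unity.  Let t <> 1 be a 2n-th root of unity with Im t >= 0 and maximal
   real part.  If some 2n-th root were not a power of t, a non-power w with
   Im w >= 0 and maximal real part would give the non-power w t^*, whose real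
   part is at least that of w; equality forces t = 1.  So t is primitive,
   hence t^n = -1, and n.-root (-1), the root of -1 of maximal real part in the
   upper half plane, is t. *)

Lemma unit_ReIm (u : algC) : `|u| = 1 -> 'Re u ^+ 2 + 'Im u ^+ 2 = 1.
Proof. by move=> nu; rewrite -normC2_Re_Im nu expr1n. Qed.

Lemma unit_Im_ge0_inj (u v : algC) : `|u| = 1 -> `|v| = 1 ->
  0 <= 'Im u -> 0 <= 'Im v -> 'Re u = 'Re v -> u = v.
Proof.
move=> nu nv iu iv Ruv; rewrite (Crect u) (Crect v) Ruv; congr (_ + 'i * _).
apply/eqP; rewrite -(eqrXn2 (ltn0Sn 1)) //; apply/eqP/(addrI ('Re v ^+ 2)).
by rewrite -{1}Ruv !unit_ReIm.
Qed.

Lemma rotate_upper_unit_coords (R : realFieldType) (a b c d : R) :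
  a <= c -> 0 <= b -> 0 <= d -> a ^+ 2 + b ^+ 2 = 1 -> c ^+ 2 + d ^+ 2 = 1 ->
  0 <= b * c - a * d /\ a <= a * c + b * d.
Proof.
move=> le_ac b_ge0 d_ge0 ab1 cd1; have c_le1 : c <= 1 by nra.
have [a_ge0|a_lt0] := lerP 0 a.
  have d_le_b : d <= b by nra.
  split; nra.
have [c_ge0|c_lt0] := lerP 0 c; split; try nra.
have b_le_d : b <= d by nra.
nra.
Qed.

Lemma rotate_upper_unit (w t : algC) : `|w| = 1 -> `|t| = 1 ->
  0 <= 'Im w -> 0 <= 'Im t -> 'Re w <= 'Re t ->
  0 <= 'Im (w * t^*) /\ 'Re w <= 'Re (w * t^*).
Proof.
move=> nw nt iw it Rwt; rewrite ImM ReM Re_conj Im_conj.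
pose a := in_algR (Creal_Re w); pose b := in_algR (Creal_Im w).
pose c := in_algR (Creal_Re t); pose d := in_algR (Creal_Im t).
have [] : 0 <= 'Im w * 'Re t - 'Re w * 'Im t /\ 'Re w <= 'Re w * 'Re t + 'Im w * 'Im t.
  apply: (@rotate_upper_unit_coords algR a b c d) => //.
  by apply: val_inj; rewrite /= unit_ReIm.
  by apply: val_inj; rewrite /= unit_ReIm.
by rewrite !mulrN opprK addrC mulrC [_ * 'Im w]mulrC; split.
Qed.

Lemma unity_root_norm (u : algC) M : (0 < M)%N -> u ^+ M = 1 -> `|u| = 1.
Proof. by move=> M_gt0 uM; apply/eqP; rewrite -(pexpr_eq1 M_gt0) // -normrX uM normr1. Qed.

Lemma unity_root_conj (u : algC) M : (0 < M)%N -> u ^+ M = 1 -> u^* = u ^+ M.-1.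
Proof.
move=> M_gt0 uM; rewrite -[u^*]mulr1 -uM -(prednK M_gt0) exprS mulrA -normCKC.
by rewrite (unity_root_norm M_gt0 uM) expr1n mul1r.
Qed.

Lemma exists_max_Re (I : finType) (f : I -> algC) (P : pred I) i0 : P i0 ->
  exists2 i, P i & forall j, P j -> 'Re (f j) <= 'Re (f i).
Proof.
move=> Pi0; have Re_cmp : {in P &, forall i j, 'Re (f i) >=< 'Re (f j)}.
  by move=> i j _ _; apply: real_comparable; apply: Creal_Re.
by case: (comparable_arg_maxP Pi0 Re_cmp) => i Pi maxi; exists i.
Qed.

Lemma exists_unity_root_max_Re M (P : pred algC) u0 :
  (0 < M)%N -> u0 ^+ M = 1 -> P u0 ->
  exists t, [/\ t ^+ M = 1, P t & forall u, u ^+ M = 1 -> P u -> 'Re u <= 'Re t].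
Proof.
move=> M_gt0 u0M Pu0; have [g prim_g] := C_prim_root_exists M_gt0.
have [i0 u0E] := prim_rootP prim_g u0M; rewrite {}u0E in Pu0.
have [i Pi maxi] := exists_max_Re (fun i : 'I_M => g ^+ i) (P := fun i => P (g ^+ i)) Pu0.
exists (g ^+ i); split=> //; first by rewrite exprAC (prim_expr_order prim_g) expr1n.
by move=> u /(prim_rootP prim_g) [j ->]; apply: maxi.
Qed.

Section MaxReUnityRoot.
Variables (M : nat) (t : algC).
Hypotheses (M_gt0 : (0 < M)%N) (tM : t ^+ M = 1) (t_neq1 : t != 1) (Im_t : 0 <= 'Im t).
Hypothesis t_max : forall u, u ^+ M = 1 -> u != 1 -> 0 <= 'Im u -> 'Re u <= 'Re t.

Let power u := [exists j : 'I_M, u == t ^+ j].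

Let powerE j : power (t ^+ j).
Proof.
by apply/existsP; exists (Ordinal (ltn_pmod j M_gt0)); rewrite /= (expr_mod _ tM).
Qed.

Lemma max_Re_unity_root_generates u : u ^+ M = 1 -> exists j, u = t ^+ j.
Proof.
move=> uM; suff /existsP [j /eqP ->] : power u by exists j.
apply: contraT => not_power_u.
have not_power_conj v : ~~ power v -> ~~ power v^*.
  apply: contra => /existsP [j /eqP vE]; rewrite -[v]conjCK vE rmorphXn /=.
  by rewrite (unity_root_conj M_gt0 tM) -exprM powerE.
have conj_unity v : v ^+ M = 1 -> v^* ^+ M = 1 by move=> vM; rewrite -rmorphXn vM rmorph1.
have [u0 u0M [not_power_u0 Im_u0]] :
    exists2 u0, u0 ^+ M = 1 & ~~ power u0 /\ 0 <= 'Im u0.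
  have /orP [Im_u|Im_u] := real_leVge (real0 _) (Creal_Im u); first by exists u.
  by exists u^*; rewrite ?conj_unity ?not_power_conj // Im_conj oppr_ge0.
have [w [wM /andP [not_power_w Im_w] w_max]] :=
  exists_unity_root_max_Re (P := fun v => ~~ power v && (0 <= 'Im v)) M_gt0 u0M
    (introT andP (conj not_power_u0 Im_u0)).
have w_neq1 : w != 1 by apply: contraNneq not_power_w => ->; rewrite -(expr0 t).
have [nw nt] := (unity_root_norm M_gt0 wM, unity_root_norm M_gt0 tM).
have [Im_wt Re_wt] := rotate_upper_unit nw nt Im_w Im_t (t_max wM w_neq1 Im_w).
have wtM : (w * t^*) ^+ M = 1 by rewrite exprMn conj_unity ?wM ?mulr1.
have not_power_wt : ~~ power (w * t^*).
  apply: contra not_power_w => /existsP [j /eqP wtE].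
  have tt : t^* * t = 1 by rewrite -normCKC nt expr1n.
  by rewrite -[w]mulr1 -tt mulrA wtE -exprSr powerE.
have wt_eq_w : w * t^* = w.
  apply: unit_Im_ge0_inj; rewrite ?(unity_root_norm M_gt0 wtM) //.
  by apply/le_anti; rewrite Re_wt w_max // not_power_wt.
have conj_t_eq1 : t^* = 1.
  by apply: (mulfI (x := w)); rewrite ?wt_eq_w ?mulr1 // -normr_eq0 nw oner_neq0.
by move: t_neq1; rewrite -[t]conjCK conj_t_eq1 rmorph1 eqxx.
Qed.

Lemma max_Re_unity_root_prim : M.-primitive_root t.
Proof.
have [k prim_k k_dvd_M] := prim_order_exists M_gt0 tM.
have [g prim_g] := C_prim_root_exists M_gt0.
have [j gE] := max_Re_unity_root_generates (prim_expr_order prim_g).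
suff M_dvd_k : (M %| k)%N by rewrite -(eqP (_ : k == M)) // eqn_dvd k_dvd_M.
by rewrite (prim_order_dvd prim_g) gE exprAC (prim_expr_order prim_k) expr1n.
Qed.

End MaxReUnityRoot.

Lemma rootCN1_prim n : (0 < n)%N -> (n * 2).-primitive_root (n.-root (-1 : algC)).
Proof.
move=> n_gt0; set y := n.-root (-1); have M_gt0 : (0 < n * 2)%N by rewrite muln_gt0 n_gt0.
have yn : y ^+ n = -1 by rewrite rootCK.
have unity_M (u : algC) : u ^+ n = -1 -> u ^+ (n * 2) = 1.
  by move=> un; rewrite exprM un sqrrN expr1n.
have N1_neq1 : (-1 : algC) != 1 by rewrite lt_eqF // (lt_trans (ltrN10 _) ltr01).
have y_neq1 : y != 1 by apply: contra_neq N1_neq1 => y1; rewrite -yn y1 expr1n.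
have Im_y : 0 <= 'Im y.
  have [n_gt1|n_le1] := ltnP 1 n; first exact: Im_rootC_ge0.
  rewrite /y; have -> : n = 1%N by apply/eqP; rewrite eqn_leq n_le1 n_gt0.
  by rewrite root1C (Creal_ImP _ _) // rpredN real1.
have [t [tM /andP [t_neq1 Im_t] t_max]] :=
  exists_unity_root_max_Re (P := fun u => (u != 1) && (0 <= 'Im u)) M_gt0
    (unity_M y yn) (introT andP (conj y_neq1 Im_y)).
have prim_t : (n * 2).-primitive_root t.
  by apply: max_Re_unity_root_prim => // u uM u_neq1 Im_u; apply: t_max; rewrite ?u_neq1.
have tn : t ^+ n = -1.
  have : (t ^+ n) ^+ 2 == 1 by rewrite -exprM tM.
  rewrite sqrf_eq1 -(prim_order_dvd prim_t) => /orP [|/eqP //].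
  by rewrite gtnNdvd // -{1}[n]muln1 ltn_pmul2l.
suff -> : y = t by [].
have [ny nt] := (unity_root_norm M_gt0 (unity_M y yn), unity_root_norm M_gt0 tM).
apply: unit_Im_ge0_inj => //.
apply/le_anti/andP; split; first by apply: t_max; rewrite ?unity_M ?y_neq1.
exact: rootC_Re_max.
Qed.

Lemma omega_prim n : (0 < n)%N -> n.-primitive_root (omega n).
Proof.
move=> n_gt0; have := dvdn_prim_root (rootCN1_prim n_gt0) (dvdn_mulr 2 (dvdnn n)).
by rewrite mulKn.
Qed.

Lemma sum_eq0_shift (R : idomainType) (T : finType) (f : T -> R) (h : T -> T) c :
  injective h -> (forall x, f (h x) = c * f x) -> c != 1 -> \sum_x f x = 0.
Proof.
move=> inj_h fh c_neq1; apply/eqP; move: c_neq1; apply: contraR => sum_neq0.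
have : (\sum_x f x) * (1 - c) = 0.
  rewrite mulrBr mulr1 mulr_suml {1}(reindex_inj inj_h) /= -sumrB.
  by rewrite big1 // => x _; rewrite fh mulrC subrr.
by move/eqP; rewrite mulf_eq0 (negbTE sum_neq0) subr_eq0 eq_sym.
Qed.

Section FiniteAbelianGroup.
Variables (s : nat) (N : 'I_s -> nat).
Local Notation X := (fgrp N).
Implicit Types x y z : X.

Lemma gaddE x y t : gadd x y t = x t + y t. Proof. exact: ffunE. Qed.
Lemma gsubE x y t : gsub x y t = x t - y t. Proof. exact: ffunE. Qed.
Lemma gzeroE t : gzero N t = 0. Proof. exact: ffunE. Qed.

Lemma gsubK x y : gadd (gsub x y) y = x.
Proof. by apply/ffunP => t; rewrite gaddE gsubE subrK. Qed.

Lemma gaddK x y : gsub (gadd x y) y = x.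
Proof. by apply/ffunP => t; rewrite gsubE gaddE addrK. Qed.

Lemma gsub0 x : gsub x (gzero N) = x.
Proof. by apply/ffunP => t; rewrite gsubE gzeroE subr0. Qed.

Lemma gsubKr x y : gsub x (gsub x y) = y.
Proof. by apply/ffunP => t; rewrite !gsubE subKr. Qed.

Lemma gsubDr x y z : gsub (gsub x y) z = gsub x (gadd z y).
Proof. by apply/ffunP => t; rewrite !gsubE gaddE opprD addrA addrAC. Qed.

Lemma gsub_eq0 x y : (gsub x y == gzero N) = (x == y).
Proof.
apply/eqP/eqP => [xy0|->]; last by apply/ffunP => t; rewrite gsubE gzeroE subrr.
by rewrite -(gsubK x y) xy0; apply/ffunP => t; rewrite gaddE gzeroE add0r.
Qed.

Lemma eq_gsubC x y z : (x == gsub y z) = (z == gsub y x).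
Proof. by apply/eqP/eqP => ->; rewrite gsubKr. Qed.

Lemma omega_expr_mod n a : omega n.+1 ^+ (a %% n.+1) = omega n.+1 ^+ a.
Proof. exact: (prim_expr_mod (omega_prim (ltn0Sn n))). Qed.

Lemma fourier_addl x y z : fourier (gadd x y) z = fourier x z * fourier y z.
Proof.
rewrite /fourier -big_split; apply: eq_bigr => t _ /=.
by rewrite gaddE -exprD -mulnDl -[RHS]omega_expr_mod -modnMml omega_expr_mod.
Qed.

Lemma fourierC x y : fourier x y = fourier y x.
Proof. by apply: eq_bigr => t _; rewrite mulnC. Qed.

Lemma fourier0l y : fourier (gzero N) y = 1.
Proof. by apply: big1 => t _; rewrite gzeroE mul0n expr0. Qed.

Lemma fourier_neq0 x y : fourier x y != 0.
Proof.
rewrite /fourier prodf_seq_neq0; apply/allP => t _ /=.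
by rewrite expf_neq0 // (prim_root_eq0 (omega_prim (ltn0Sn _))).
Qed.

Lemma fourier_subl x y z : fourier (gsub x y) z = fourier x z / fourier y z.
Proof. by rewrite -[in fourier x z](gsubK x y) fourier_addl mulfK ?fourier_neq0. Qed.

Lemma fourier_subr x y z : fourier x (gsub y z) = fourier x y / fourier x z.
Proof. by rewrite fourierC fourier_subl !(fourierC x). Qed.

Lemma fourier_nondegenerate y : y != gzero N -> exists z, fourier z y != 1.
Proof.
move=> y_neq0; have [t yt_neq0] : exists t, y t != 0.
  apply/existsP; apply: contraNT y_neq0 => /existsPn yt0.
  by apply/eqP/ffunP => t; rewrite gzeroE; apply/eqP/negPn.
pose z : X := [ffun u => if u == t then inord 1 else 0].
exists z; rewrite /fourier (bigD1 t) //= big1 => [|u /negbTE ut]; last first.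
  by rewrite ffunE ut mul0n expr0.
have yt_gt0 : (0 < y t)%N.
  by rewrite lt0n; apply: contra yt_neq0 => /eqP yt0; apply/eqP/val_inj.
rewrite ffunE eqxx inordK ?mul1n ?mulr1; last exact: leq_ltn_trans yt_gt0 (ltn_ord (y t)).
rewrite -(expr0 (omega (N t).+1)) (eq_prim_root_expr (omega_prim (ltn0Sn _))).
by rewrite mod0n modn_small ?(gtn_eqF yt_gt0).
Qed.

Lemma sum_fourier y : \sum_x fourier x y = #|X|%:R * (y == gzero N)%:R.
Proof.
have [->|y_neq0] := eqVneq y (gzero N).
  by rewrite mulr1 (eq_bigr (fun _ => 1)) ?sumr_const // => x _; rewrite fourierC fourier0l.
have [z fzy_neq1] := fourier_nondegenerate y_neq0.
rewrite mulr0.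
apply: (sum_eq0_shift (h := fun x => gadd x z) _ _ fzy_neq1) => [x1 x2 e|x].
  by rewrite -(gaddK x1 z) e gaddK.
by rewrite fourier_addl mulrC.
Qed.

Lemma fourier_convolution w l k :
  \sum_(l' : X) fourier w (gsub l l') * fourier l' k = #|X|%:R * fourier l w * (k == w)%:R.
Proof.
rewrite mulrAC -gsub_eq0 -sum_fourier mulr_suml; apply: eq_bigr => l' _.
rewrite !fourier_subr (fourierC w l) (fourierC w l'); ring.
Qed.

End FiniteAbelianGroup.

Lemma sumr_mul_delta (R : nzSemiRingType) (T : finType) (f : T -> R) a :
  \sum_t f t * (t == a)%:R = f a.
Proof.
rewrite (bigD1 a) //= eqxx mulr1 big1 ?addr0 // => t /negbTE ->.
by rewrite mulr0.
Qed.

Lemma natr_card_neq0 (R : numDomainType) (T : finType) (t : T) : (#|T|%:R : R) != 0.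
Proof. by rewrite pnatr_eq0 -lt0n; apply/card_gt0P; exists t. Qed.

Section ProjectionOperators.
Variables (s r : nat) (NX : 'I_s -> nat) (NY : 'I_r -> nat).
Local Notation X := (fgrp NX).
Local Notation Y := (fgrp NY).
Variable Q : X -> Y -> algC.

Lemma epsE (k : X) (e : Y) l d : eps k e l d = fourier l k * (d == e)%:R.
Proof.
rewrite /eps (bigD1 l) //= big1 => [|x /negbTE xl]; first by rewrite /ebasis eqxx addr0.
by rewrite /ebasis eq_sym xl mulr0.
Qed.

Lemma PmatE (i : X) (c : Y) l d l' e :
  Pmat Q i c l d l' e = #|X|%:R^-1 * (d == gsub e c)%:R *
    \sum_(j : X) Q i d * Q j e / (Q i e * Q j d) * fourier (gsub i j) (gsub l l').
Proof.
have sum_Y : \sum_(a : Y) fourier a (gsub d e) * fourier a c = #|Y|%:R * (d == gsub e c)%:R.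
  rewrite -gsub_eq0 -sum_fourier; apply: eq_bigr => a _.
  by rewrite !fourier_subr invf_div; ring.
rewrite /Pmat exchange_big mulr_sumr; apply: eq_bigr => j _ /=.
under eq_bigr do rewrite /Wmat gsub0 [fourier _ c * _]mulrC -[_ * fourier _ c]mulrA.
rewrite -mulr_sumr sum_Y invfM.
(* [ring] does not cancel #|Y|, so let it appear on the right as well. *)
rewrite -[in RHS](mulfK (natr_card_neq0 _ (gzero NY)) (#|X|%:R^-1)); ring.
Qed.

Lemma mapply_Pmat_eps i c k e l d : mapply (Pmat Q i c) (eps k e) l d =
  Q i (gsub e c) * Q (gsub i k) e / (Q i e * Q (gsub i k) (gsub e c))
  * eps k (gsub e c) l d.
Proof.
rewrite /mapply epsE.
under eq_bigr do under eq_bigr do rewrite epsE mulrA.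
under eq_bigr do rewrite sumr_mul_delta PmatE.
have [->|_] := eqVneq d (gsub e c); last first.
  by rewrite big1 ?mulr0 // => l' _; rewrite !mul0r.
rewrite !mulr1.
under eq_bigr do rewrite -mulrA mulr_suml.
rewrite -mulr_sumr exchange_big /=.
under eq_bigr do rewrite -(eq_bigr _ (fun _ _ => mulrA _ _ _)) -mulr_sumr fourier_convolution
  eq_gsubC !mulrA.
rewrite sumr_mul_delta gsubKr [_ * #|X|%:R]mulrC !mulrA.
by rewrite mulVf ?mul1r // natr_card_neq0.
Qed.

Lemma mapply_eq (A : mat X Y) (v w : vect X Y) l d :
  (forall l d, v l d = w l d) -> mapply A v l d = mapply A w l d.
Proof. by move=> vw; apply: eq_bigr => ? _; apply: eq_bigr => ? _; rewrite vw. Qed.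

Lemma mapplyZ (A : mat X Y) a (v : vect X Y) l d :
  mapply A (fun l d => a * v l d) l d = a * mapply A v l d.
Proof.
rewrite /mapply mulr_sumr; apply: eq_bigr => ? _; rewrite mulr_sumr.
by apply: eq_bigr => ? _; rewrite mulrCA.
Qed.

Lemma Pprod_apply_eps (ics : seq (X * Y)) k e : exists a, forall l d,
  Pprod_apply Q ics (eps k e) l d =
  a * eps k (gsub e (foldr (fun ic acc => gadd ic.2 acc) (gzero NY) ics)) l d.
Proof.
elim: ics => [|[i c] ics [a IH]] /=; first by exists 1 => l d; rewrite gsub0 mul1r.
set S := foldr _ _ ics in IH *.
exists (a * (Q i (gsub (gsub e S) c) * Q (gsub i k) (gsub e S) /
   (Q i (gsub e S) * Q (gsub i k) (gsub (gsub e S) c)))) => l d.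
by rewrite (mapply_eq _ _ _ IH) mapplyZ mapply_Pmat_eps gsubDr mulrA.
Qed.

End ProjectionOperators.

Theorem lemma3p9 (s r : nat) (NX : 'I_s -> nat) (NY : 'I_r -> nat)
  (Q : fgrp NX -> fgrp NY -> algC)
  (hQ : forall (x : fgrp NX) (y : fgrp NY), `|Q x y| = 1) :
  (forall (i : fgrp NX) (c : fgrp NY) (k : fgrp NX) (e : fgrp NY)
          (l : fgrp NX) (d : fgrp NY),
     mapply (Pmat Q i c) (eps k e) l d =
     (Q i (gsub e c) * Q (gsub i k) e / (Q i e * Q (gsub i k) (gsub e c)))
       * eps k (gsub e c) l d)
  /\
  (forall ics : seq (fgrp NX * fgrp NY),
     foldr (fun ic acc => gadd ic.2 acc) (gzero NY) ics = gzero NY ->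
     forall (k : fgrp NX) (e : fgrp NY), exists lam : algC,
       forall (l : fgrp NX) (d : fgrp NY),
         Pprod_apply Q ics (eps k e) l d = lam * eps k e l d).
Proof.
split=> [|ics sum_c0 k e]; first exact: mapply_Pmat_eps.
have [a Pprod_eps] := Pprod_apply_eps Q ics k e.
by exists a => l d; rewrite Pprod_eps sum_c0 gsub0.
Qed.
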